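(* For an $E$-linear code $C$ of length $2n$, $C^{\perp_{S_R}}=C^{\perp_S}$ if and only if $C$ is right symplectic nice.
   Context: $E=\langle \kappa,\tau \mid 2\kappa=2\tau=0,\ \kappa^2=\kappa,\ \tau^2=\tau,\ \kappa\tau=\kappa,\ \tau\kappa=\tau\rangle$ is the non-unital ring $\{0,\kappa,\tau,\zeta\}$ ($|E|=4$), $\zeta=\kappa+\tau$, with $e\kappa=e\tau=e$, $e\zeta=0$ for all $e\in E$. An $E$-linear code of length $2n$ is a left $E$-submodule $C\subseteq E^{2n}$. Symplectic inner product: for $x=(u|v),y=(u'|v')\in E^{2n}$, $\langle x,y\rangle_s=\sum_i u_iv'_i+\sum_i v_iu'_i$. $C^{\perp_{S_L}}=\{z\in E^{2n}:\langle z,w\rangle_s=0\ \forall w\in C\}$, $C^{\perp_{S_R}}=\{z\in E^{2n}:\langle w,z\rangle_s=0\ \forall w\in C\}$, $C^{\perp_S}=C^{\perp_{S_L}}\cap C^{\perp_{S_R}}$. $C$ is right symplectic nice if $|C|\,|C^{\perp_{S_R}}|=|E|^{2n}$. *)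

From mathcomp Require Import all_boot.
Set Implicit Arguments. Unset Strict Implicit. Unset Printing Implicit Defensive.

(* The non-unital ring E = {0, kappa, tau, zeta}, encoded on bool * bool:
   0 = (false,false), kappa = (true,false), tau = (false,true),
   zeta = kappa + tau = (true,true).  Addition is componentwise xor
   (so 2x = 0), and multiplication is determined by the relations
   kappa^2 = kappa, tau^2 = tau, kappa tau = kappa, tau kappa = tau and
   distributivity: x * y = x if y \in {kappa, tau}, and 0 otherwise. *)
Definition E : finType := (bool * bool)%type.
Definition E0 : E := (false, false).
Definition Ek : E := (true, false).
Definition Et : E := (false, true).
Definition Ez : E := (true, true).

Definition addE (x y : E) : E := (x.1 (+) y.1, x.2 (+) y.2).
Definition mulE (x y : E) : E := if y.1 (+) y.2 then x else E0.

Fact E_rel : [/\ mulE Ek Ek = Ek, mulE Et Et = Et, mulE Ek Et = Ek,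
               mulE Et Ek = Et & addE Ek Et = Ez].
Proof. by []. Qed.

Definition word (n : nat) : finType := ({ffun 'I_n -> E} * {ffun 'I_n -> E})%type.

Definition word0 n : word n := ([ffun _ => E0], [ffun _ => E0]).
Definition addw n (x y : word n) : word n :=
  ([ffun i => addE (x.1 i) (y.1 i)], [ffun i => addE (x.2 i) (y.2 i)]).
Definition scalew n (e : E) (x : word n) : word n :=
  ([ffun i => mulE e (x.1 i)], [ffun i => mulE e (x.2 i)]).

Definition Elinear n (C : {set word n}) : Prop :=
  [/\ word0 n \in C,
      (forall x y, x \in C -> y \in C -> addw x y \in C) &
      (forall (e : E) x, x \in C -> scalew e x \in C)].

Definition symp n (x y : word n) : E :=
  addE (\big[addE/E0]_(i < n) mulE (x.1 i) (y.2 i))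
       (\big[addE/E0]_(i < n) mulE (x.2 i) (y.1 i)).

Definition perpSL n (C : {set word n}) : {set word n} :=
  [set z | [forall w in C, symp z w == E0]].
Definition perpSR n (C : {set word n}) : {set word n} :=
  [set z | [forall w in C, symp w z == E0]].
Definition perpS n (C : {set word n}) : {set word n} :=
  perpSL C :&: perpSR C.

Definition right_symplectic_nice n (C : {set word n}) : Prop :=
  #|C| * #|perpSR C| = #|E| ^ (2 * n).

From mathcomp Require Import all_boot all_algebra.
From mathcomp Require Import fingroup mxabelem.
Set Implicit Arguments. Unset Strict Implicit. Unset Printing Implicit Defensive.
Import GRing.Theory.
Local Open Scope ring_scope.

(* Let [res : E -> E/{0, zeta} = F_2] be [res (a, b) = a + b].  As [e * y] is
   [e] or [0] according as [res y] is 1 or 0, the symplectic product [<w, z>_s]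
   only depends on [res z]: its two bits are the standard symplectic forms over
   F_2 of the two bit vectors of [w] against [res z].  Writing every [e] as
   [res e kappa + e.2 zeta], an E-linear code splits as [C = A kappa + B zeta]
   with [A = res C] contained in [B = {q | zeta q \in C}].  Hence
   [C^{perp_S_R}] is the full preimage under [res] of [B^perp], whereas
   [C^{perp_S_L}] is everything exactly when [A = 0].  Counting gives
   [|C| |C^{perp_S_R}| = |A| |B| |B^perp| 4^n = |A| 16^n], which is
   [|E|^{2n}] exactly when [A = 0]: both conditions are equivalent to [A = 0]. *)

Lemma card_rowg_perp (F : finFieldType) m r (A : 'M[F]_(r, m)) (S : 'M[F]_m) :
  S \in unitmx ->
  (#|rowg A|
     * #|[set y : 'rV_m | [forall b in rowg A, (b *m S *m y^T) ord0 ord0 == 0%R]]|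
   = #|F| ^ m)%N.
Proof.
move=> S_unit.
have -> : [set y : 'rV_m | [forall b in rowg A, (b *m S *m y^T) ord0 ord0 == 0]]
          = rowg (kermx (A *m S)^T).
  apply/setP=> y; rewrite !inE sub_kermx -[y]trmxK -trmx_mul trmx_eq0 trmxK.
  apply/forall_inP/eqP => [perp_y | ASy0 b].
    apply/matrixP=> i j; rewrite (ord1 j) [RHS]mxE.
    have /perp_y/eqP <- : row i A \in rowg A by rewrite mem_rowg row_sub.
    by rewrite -!row_mul [RHS]mxE.
  by rewrite inE => /submxP[u ->]; rewrite -!mulmxA (mulmxA A) ASy0 mulmx0 mxE.
rewrite !card_rowg mxrank_ker mxrank_tr mxrankMfree ?row_free_unit //.
by rewrite -expnD subnKC // rank_leq_col.
Qed.

Lemma rowg_mx_addrK m (B : {set 'rV['F_2]_m}) :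
  0 \in B -> {in B &, forall x y, x + y \in B} -> rowg (rowg_mx B) = B.
Proof.
move=> B0 BD; have B_group : group_set B by apply/group_setP; split.
exact: (rowg_mxK (Group B_group)).
Qed.

Definition b2F (b : bool) : 'F_2 := b%:R.

Lemma b2F_addb a b : b2F (a (+) b) = b2F a + b2F b.
Proof. by case: a; case: b; rewrite /b2F /= ?addr0 ?add0r //; apply/val_inj. Qed.

Lemma b2F_andb a b : b2F (a && b) = b2F a * b2F b.
Proof. by case: a; rewrite /b2F /= ?mul1r ?mul0r. Qed.

Lemma b2F_eq0 b : (b2F b == 0) = ~~ b.
Proof. by case: b. Qed.

Lemma b2F_inj : injective b2F.
Proof. by case; case. Qed.

Lemma b2F_neq0 (a : 'F_2) : b2F (a != 0) = a.
Proof. by case: a => [[|[|k]] //] lt_a; apply/val_inj. Qed.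

Section SymplecticForm.

Variable n : nat.
Implicit Types x y : 'rV['F_2]_(n + n).

Definition symp_mx : 'M['F_2]_(n + n) := block_mx 0 1%:M 1%:M 0.

Definition sform x y : 'F_2 := (x *m symp_mx *m y^T) 0 0.

Definition sperp (B : {set 'rV['F_2]_(n + n)}) : {set 'rV['F_2]_(n + n)} :=
  [set y | [forall b in B, sform b y == 0]].

Lemma symp_mx_unit : symp_mx \in unitmx.
Proof.
have sympK : symp_mx *m symp_mx = 1%:M.
  by rewrite mulmx_block !mul0mx !mulmx0 !mulmx1 !add0r !addr0 -scalar_mx_block.
by case: (mulmx1_unit sympK).
Qed.

Lemma sform_row_mx (a1 a2 b1 b2 : 'rV['F_2]_n) :
  sform (row_mx a1 a2) (row_mx b1 b2) = (a1 *m b2^T) 0 0 + (a2 *m b1^T) 0 0.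
Proof.
rewrite /sform mul_row_block !mulmx0 !mulmx1 !add0r !addr0 tr_row_mx.
by rewrite mul_row_col mxE addrC.
Qed.

Lemma sformDl x1 x2 y : sform (x1 + x2) y = sform x1 y + sform x2 y.
Proof. by rewrite /sform !mulmxDl mxE. Qed.

Lemma sformr0 x : sform x 0 = 0.
Proof. by rewrite /sform trmx0 mulmx0 mxE. Qed.

Lemma sperp0 (B : {set 'rV['F_2]_(n + n)}) : 0 \in sperp B.
Proof. by rewrite inE; apply/forall_inP => b _; rewrite sformr0. Qed.

Lemma sform_nondeg y : (forall x, sform x y = 0) -> y = 0.
Proof.
move=> y_rad; have Sy0 : symp_mx *m y^T = 0.
  apply/matrixP => k j; rewrite (ord1 j) [RHS]mxE -(y_rad (delta_mx 0 k)) /sform.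
  by rewrite -mulmxA -rowE [RHS]mxE.
by rewrite -[y]trmxK -(mulKmx symp_mx_unit y^T) Sy0 mulmx0 trmx0.
Qed.

Lemma card_sperp (B : {set 'rV['F_2]_(n + n)}) :
  0 \in B -> {in B &, forall x y, x + y \in B} ->
  (#|B| * #|sperp B| = 2 ^ (n + n))%N.
Proof.
move=> B0 BD; rewrite -(rowg_mx_addrK B0 BD).
by have := card_rowg_perp (rowg_mx B) symp_mx_unit; rewrite card_Fp.
Qed.

End SymplecticForm.

Definition res (e : E) : bool := e.1 (+) e.2.

(* [mkE a b] is [a kappa + b zeta]. *)
Definition mkE (a b : bool) : E := (a (+) b, b).

Section Words.

Variable n : nat.
Implicit Types (w x z : word n) (p q : 'rV['F_2]_(n + n)).

Definition word_at w (k : 'I_(n + n)) : E :=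
  match split k with inl i => w.1 i | inr i => w.2 i end.

Definition bitv (f : E -> bool) w : 'rV['F_2]_(n + n) :=
  row_mx (\row_i b2F (f (w.1 i))) (\row_i b2F (f (w.2 i))).

Definition of_bits p q : word n :=
  ([ffun i => mkE (p 0 (lshift n i) != 0) (q 0 (lshift n i) != 0)],
   [ffun i => mkE (p 0 (rshift n i) != 0) (q 0 (rshift n i) != 0)]).

Definition bits w := (bitv res w, bitv snd w).

Lemma word_at_inj x z : (forall k, word_at x k = word_at z k) -> x = z.
Proof.
case: x z => [x1 x2] [z1 z2] xz; congr pair; apply/ffunP => i.
  by have := xz (lshift n i); rewrite /word_at (unsplitK (inl _ i)).
by have := xz (rshift n i); rewrite /word_at (unsplitK (inr _ i)).
Qed.

Lemma word_at0 k : word_at (word0 n) k = E0.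
Proof. by rewrite /word_at; case: (split k) => i; rewrite ffunE. Qed.

Lemma word_atD x z k : word_at (addw x z) k = addE (word_at x k) (word_at z k).
Proof. by rewrite /word_at; case: (split k) => i; rewrite ffunE. Qed.

Lemma word_atZ e x k : word_at (scalew e x) k = mulE e (word_at x k).
Proof. by rewrite /word_at; case: (split k) => i; rewrite ffunE. Qed.

Lemma word_at_of_bits p q k :
  word_at (of_bits p q) k = mkE (p 0 k != 0) (q 0 k != 0).
Proof.
rewrite /word_at; case: splitP => i ki; rewrite ffunE /=;
  by congr (mkE (p 0 _ != 0) (q 0 _ != 0)); apply/val_inj.
Qed.

Lemma bitvE f w k : bitv f w 0 k = b2F (f (word_at w k)).
Proof. by rewrite /bitv /word_at mxE; case: (split k) => i; rewrite mxE. Qed.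

Lemma bitv_fst w : bitv fst w = bitv res w + bitv snd w.
Proof.
apply/rowP => k; rewrite [RHS]mxE !bitvE -b2F_addb /res.
by case: (word_at w k) => [[] []].
Qed.

Lemma res_of_bits p q : bitv res (of_bits p q) = p.
Proof.
apply/rowP => k; rewrite bitvE word_at_of_bits /res /mkE /=.
by rewrite -addbA addbb addbF b2F_neq0.
Qed.

Lemma snd_of_bits p q : bitv snd (of_bits p q) = q.
Proof. by apply/rowP => k; rewrite bitvE word_at_of_bits b2F_neq0. Qed.

Lemma of_bitsK w : of_bits (bitv res w) (bitv snd w) = w.
Proof.
apply: word_at_inj => k; rewrite word_at_of_bits !bitvE !b2F_eq0 !negbK.
by case: (word_at w k) => [[] []].
Qed.

Lemma bits_bij : bijective (@bits).
Proof.
exists (fun u => of_bits u.1 u.2) => [w | [p q]]; first exact: of_bitsK.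
by rewrite /bits res_of_bits snd_of_bits.
Qed.

Lemma card_bits (R : {set 'rV['F_2]_(n + n) * 'rV['F_2]_(n + n)}) :
  #|bits @^-1: R| = #|R|.
Proof. by apply: on_card_preimset; apply: onW_bij; exact: bits_bij. Qed.

Lemma of_bits00 : of_bits 0 0 = word0 n.
Proof. by apply: word_at_inj => k; rewrite word_at_of_bits word_at0 mxE. Qed.

Lemma of_bits0D q1 q2 : of_bits 0 (q1 + q2) = addw (of_bits 0 q1) (of_bits 0 q2).
Proof.
apply: word_at_inj => k; rewrite word_atD !word_at_of_bits !mxE.
move: (q1 0 k) (q2 0 k) => a b; rewrite -(b2F_neq0 a) -(b2F_neq0 b) -b2F_addb.
by rewrite !b2F_eq0 !negbK; case: (a != 0); case: (b != 0).
Qed.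

Lemma of_bits0_res x : of_bits 0 (bitv res x) = scalew Ez x.
Proof.
apply: word_at_inj => k; rewrite word_at_of_bits word_atZ bitvE mxE b2F_eq0 negbK.
by case: (word_at x k) => [[] []].
Qed.

Lemma of_bits0_snd x : of_bits 0 (bitv snd x) = addw x (scalew Ek x).
Proof.
apply: word_at_inj => k; rewrite word_atD word_atZ word_at_of_bits bitvE mxE.
by rewrite b2F_eq0 negbK; case: (word_at x k) => [[] []].
Qed.

Lemma word_split x z : bitv res z = bitv res x ->
  z = addw (scalew Ek x) (of_bits 0 (bitv snd z)).
Proof.
move=> /rowP xz; apply: word_at_inj => k.
have := xz k; rewrite !bitvE => /b2F_inj.
rewrite word_atD word_atZ word_at_of_bits bitvE mxE b2F_eq0 negbK /res.
by case: (word_at x k) => [[] []]; case: (word_at z k) => [[] []].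
Qed.

Lemma symp_bitv (f : E -> bool) w z :
  {morph f : e1 e2 / addE e1 e2 >-> e1 (+) e2} -> f E0 = false ->
  b2F (f (symp w z)) = sform (bitv f w) (bitv res z).
Proof.
move=> fD f0; rewrite sform_row_mx /symp fD b2F_addb.
have bfD : {morph (fun e => b2F (f e)) : e1 e2 / addE e1 e2 >-> e1 + e2}.
  by move=> e1 e2 /=; rewrite fD b2F_addb.
have bf0 : b2F (f E0) = 0 by rewrite f0.
rewrite !(big_morph _ bfD bf0) !mxE; congr (_ + _); apply: eq_bigr => i _;
  by rewrite !mxE /mulE -/(res _) -b2F_andb; case: (res _); rewrite ?andbT ?andbF.
Qed.

Lemma symp_eq0 w z :
  (symp w z == E0) =
  (sform (bitv fst w) (bitv res z) == 0) && (sform (bitv snd w) (bitv res z) == 0).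
Proof.
by rewrite -!symp_bitv // !b2F_eq0; case: (symp w z) => [[] []].
Qed.

End Words.

Section LinearCode.

Variables (n : nat) (C : {set word n}).
Hypothesis C_lin : Elinear C.

Definition resC := [set bitv res x | x in C].
Definition zetaC := [set q | of_bits 0 q \in C].

Lemma resC0 : 0 \in resC.
Proof.
case: C_lin => C0 _ _; apply/imsetP; exists (word0 n) => //.
by rewrite -of_bits00 res_of_bits.
Qed.

Lemma resC_sub_zetaC : resC \subset zetaC.
Proof.
case: C_lin => _ _ CZ; apply/subsetP => _ /imsetP[x Cx ->].
by rewrite inE of_bits0_res CZ.
Qed.

Lemma mem_code z : (z \in C) = (bitv res z \in resC) && (bitv snd z \in zetaC).
Proof.
case: C_lin => _ CD CZ; apply/idP/andP => [Cz | [/imsetP[x Cx zx]]].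
  by rewrite imset_f // inE of_bits0_snd CD ?CZ.
by rewrite inE => Bz; rewrite (word_split zx) CD ?CZ.
Qed.

Lemma card_code : #|C| = (#|resC| * #|zetaC|)%N.
Proof.
rewrite -cardsX -(card_bits (setX resC zetaC)).
by apply: eq_card => z; rewrite mem_code [in RHS]inE in_setX.
Qed.

Lemma card_zetaC_sperp : (#|zetaC| * #|sperp zetaC| = 2 ^ (n + n))%N.
Proof.
case: C_lin => C0 CD _; apply: card_sperp => [|q1 q2].
  by rewrite inE of_bits00.
by rewrite !inE of_bits0D; exact: CD.
Qed.

Lemma mem_perpSR z : (z \in perpSR C) = (bitv res z \in sperp zetaC).
Proof.
rewrite !inE; apply/forall_inP/forall_inP => [z_perp q | z_perp w Cw].
  rewrite inE => /z_perp; rewrite symp_eq0 => /andP[+ _].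
  by rewrite bitv_fst res_of_bits snd_of_bits add0r.
move: Cw; rewrite mem_code => /andP[Aw Bw].
rewrite symp_eq0 bitv_fst sformDl (eqP (z_perp _ Bw)).
by rewrite (eqP (z_perp _ (subsetP resC_sub_zetaC _ Aw))) addr0 eqxx.
Qed.

Lemma card_perpSR : #|perpSR C| = (#|sperp zetaC| * 2 ^ (n + n))%N.
Proof.
have card_rV : #|[set: 'rV['F_2]_(n + n)]| = (2 ^ (n + n))%N.
  by rewrite cardsT card_mx card_Fp // mul1n.
rewrite -card_rV -cardsX -(card_bits (setX (sperp zetaC) setT)).
by apply: eq_card => z; rewrite mem_perpSR [in RHS]inE in_setX in_setT andbT.
Qed.

Lemma perpSR_eq_perpS_res0 : perpSR C = perpS C <-> resC = [set 0].
Proof.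
split => [RS | A0].
  apply/eqP; rewrite eqEsubset sub1set resC0 andbT.
  apply/subsetP => _ /imsetP[x Cx ->]; rewrite inE; apply/eqP/sform_nondeg => q.
  have : of_bits 0 q \in perpS C by rewrite -RS mem_perpSR res_of_bits sperp0.
  rewrite inE => /andP[]; rewrite inE => /forall_inP/(_ x Cx).
  by rewrite symp_eq0 bitv_fst res_of_bits snd_of_bits add0r => /andP[/eqP].
have perpSL_T : perpSL C = setT.
  apply/setP => z; rewrite !inE; apply/forall_inP => w Cw.
  have : bitv res w \in resC by exact: imset_f.
  by rewrite A0 inE symp_eq0 => /eqP ->; rewrite !sformr0 eqxx.
by rewrite /perpS perpSL_T setTI.
Qed.

Lemma right_symplectic_nice_res0 : right_symplectic_nice C <-> resC = [set 0].
Proof.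
have cardE : (#|E| ^ (2 * n) = 2 ^ (n + n) * 2 ^ (n + n))%N.
  by rewrite card_prod card_bool expnMn mul2n addnn.
rewrite /right_symplectic_nice card_code card_perpSR cardE.
rewrite -mulnA (mulnA #|zetaC|) card_zetaC_sperp.
have N_gt0 : (0 < 2 ^ (n + n) * 2 ^ (n + n))%N by rewrite muln_gt0 expn_gt0.
split => [/eqP | ->]; last by rewrite cards1 mul1n.
rewrite -[X in _ == X]mul1n eqn_pmul2r // => /cards1P[a Aa].
by have := resC0; rewrite Aa inE => /eqP <-.
Qed.

End LinearCode.

Theorem mainTheorem11 (n : nat) (C : {set word n}) :
  Elinear C -> (perpSR C = perpS C <-> right_symplectic_nice C).
Proof.
move=> C_lin; apply: iff_trans (perpSR_eq_perpS_res0 C_lin) _.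
exact: iff_sym (right_symplectic_nice_res0 C_lin).
Qed.
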